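(* Let $P=P(G,[\omega])$ be a toric poset and $I\subseteq V$. Then $I$ is a toric filter of $P$ if and only if its characteristic vector $\chi_I\in\{0,1\}^V\subseteq\mathbb{R}^V$ is a vertex of the order polytope $\mathcal{O}(P(G,\omega'))$ for some $\omega'\in[\omega]$.
   Context: Toric poset setup: $V=[n]$; $\mathrm{Acyc}(G)$ acyclic orientations; $P(G,\omega)$ the poset given by the transitive closure of $\omega$; $[\omega]$ the class under the equivalence generated by converting a source into a sink; toric chambers (components of $\mathbb{R}^V/\mathbb{Z}^V$ minus the hyperplanes $\{x_i\equiv x_j\bmod 1\}$, $\{i,j\}\in E$) correspond bijectively to classes $[\omega]$; $P(G,[\omega])$ is identified with its chamber $c(P)$. $D^{\mathrm{tor}}_\pi$ is the image in the torus of $\{x\in\mathbb{R}^V:x_i=x_j$ for $i,j$ in a common block of $\pi\}$. Toric filter: $I=\emptyset$, $I=V$, or $\emptyset\ne I\ne V$ with $\overline{c(P)}\cap D^{\mathrm{tor}}_{\{I,V\setminus I\}}$ two-dimensional. Order polytope: $\mathcal{O}(Q)=\{x\in[0,1]^V: x_i\le x_j$ whenever $i\le_Q j\}$. $\chi_I(k)=1$ if $k\in I$ and $0$ otherwise. *)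

From Stdlib Require Import Reals ZArith Relations.
From mathcomp Require Import all_boot.
Set Implicit Arguments. Unset Strict Implicit. Unset Printing Implicit Defensive.

(* Vertex set V = 'I_n ; a simple graph G is a symmetric irreflexive rel g.
   An orientation is its set of arcs A : {set 'I_n * 'I_n}, (i,j) \in A meaning i -> j. *)

Definition arcs_rel (n : nat) (A : {set 'I_n * 'I_n}) : rel 'I_n :=
  fun u v => (u, v) \in A.

Definition is_acyc (n : nat) (g : rel 'I_n) (A : {set 'I_n * 'I_n}) : Prop :=
  (forall i j, (i, j) \in A -> g i j) /\
  (forall i j, g i j -> (i, j) \in A \/ (j, i) \in A) /\
  (forall i j, (i, j) \in A -> ~~ connect (arcs_rel A) j i).

Definition is_source (n : nat) (A : {set 'I_n * 'I_n}) (i : 'I_n) : bool :=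
  [forall j, (j, i) \notin A].

(* convert the (source) vertex i into a sink: reverse all arcs at i *)
Definition flip (n : nat) (A : {set 'I_n * 'I_n}) (i : 'I_n) : {set 'I_n * 'I_n} :=
  [set p : 'I_n * 'I_n |
     if p.2 == i then (i, p.1) \in A else (p.1 != i) && (p \in A)].

Definition flip_step (n : nat) (g : rel 'I_n) (A B : {set 'I_n * 'I_n}) : Prop :=
  is_acyc g A /\ is_acyc g B /\ exists i, is_source A i /\ B = flip A i.

Definition toric_equiv (n : nat) (g : rel 'I_n) : relation {set 'I_n * 'I_n} :=
  clos_refl_sym_trans _ (@flip_step n g).

Local Open Scope R_scope.

Definition vec (n : nat) := 'I_n -> R.

Definition is_int (r : R) : Prop := exists z : Z, r = IZR z.

(* x (a lift to R^V) lies off the toric hyperplanes x_i = x_j mod 1, {i,j} in E *)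
Definition off_arr (n : nat) (g : rel 'I_n) (x : vec n) : Prop :=
  forall i j, g i j -> ~ is_int (x i - x j).

(* x and y represent the same point of the torus R^V / Z^V *)
Definition tor_eq (n : nat) (x y : vec n) : Prop :=
  forall i, is_int (x i - y i).

(* pi(x) and pi(y) lie in the same connected (= path) component of the
   complement of the toric arrangement; paths in the torus are lifted to R^V *)
Definition same_tor_chamber (n : nat) (g : rel 'I_n) (x y : vec n) : Prop :=
  exists gam : R -> vec n,
    (forall i, continuity (fun t => gam t i)) /\
    (forall i, gam 0 i = x i) /\
    tor_eq (gam 1) y /\
    (forall t, 0 <= t <= 1 -> off_arr g (gam t)).

(* y (a lift) lies in the toric chamber c(P(G,[omega])): the component containing
   pi(x) for a point x of (0,1)^V with x_i < x_j for every arc i -> j of omega *)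
Definition in_chamber (n : nat) (g : rel 'I_n) (A : {set 'I_n * 'I_n}) (y : vec n) : Prop :=
  exists x : vec n,
    (forall i, 0 < x i < 1) /\
    (forall i j, (i, j) \in A -> x i < x j) /\
    same_tor_chamber g x y.

Definition in_closure (n : nat) (g : rel 'I_n) (A : {set 'I_n * 'I_n}) (y : vec n) : Prop :=
  forall eps, eps > 0 ->
    exists s, in_chamber g A s /\ forall i, Rabs (s i - y i) < eps.

(* parametrization (a,b) |-> pi(a chi_I + b chi_{V\I}) of D^tor_{I, V\I} *)
Definition dpt (n : nat) (I : {set 'I_n}) (a b : R) : vec n :=
  fun i => if i \in I then a else b.

(* I is a toric filter of P(G,[omega]); for nonempty proper I, the set
   closure(c(P)) cap D^tor_{I,V\I} is two-dimensional, i.e. (D being a 2-torus)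
   has nonempty interior relative to D *)
Definition toric_filter (n : nat) (g : rel 'I_n) (A : {set 'I_n * 'I_n})
    (I : {set 'I_n}) : Prop :=
  I = set0 \/ I = [set: 'I_n] \/
  (I != set0 /\ I != [set: 'I_n] /\
   exists a0 b0 d, d > 0 /\
     forall a b, Rabs (a - a0) < d -> Rabs (b - b0) < d ->
       in_closure g A (dpt I a b)).

Definition in_order_poly (n : nat) (A : {set 'I_n * 'I_n}) (x : vec n) : Prop :=
  (forall i, 0 <= x i <= 1) /\
  (forall i j, connect (arcs_rel A) i j -> x i <= x j).

Definition is_vertex_order_poly (n : nat) (A : {set 'I_n * 'I_n}) (x : vec n) : Prop :=
  in_order_poly A x /\
  forall (y z : vec n) (t : R), in_order_poly A y -> in_order_poly A z ->
    0 < t < 1 -> (forall i, x i = t * y i + (1 - t) * z i) ->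
    forall i, y i = x i /\ z i = x i.

Definition chi (n : nat) (I : {set 'I_n}) : vec n :=
  fun k => if k \in I then 1 else 0.

From Stdlib Require Import Reals ZArith Relations Lia Lra.
From mathcomp Require Import all_boot zify.
Set Implicit Arguments. Unset Strict Implicit. Unset Printing Implicit Defensive.
Local Open Scope R_scope.

(* A point y of R^V lies in the toric chamber of [A] iff, after an integer
   translation, every edge difference y_i - y_j has integer part edge_floor A i j
   (-1 across an arc i -> j, 0 otherwise).  The edge floors of flip-equivalent
   orientations differ by the coboundary of an integer potential, and conversely
   flipping sources at the top of such a potential reduces it to a constant
   (Pretzel); hence a chamber determines its class [A].
   If chi_I is a vertex of O(P(G,A')), then I is an up-set of A', and the points
   a chi_I + b chi_(V\I), perturbed along a linear extension of A', lie in the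
   chamber of A' (= that of A) for all (a,b) near (3/4,1/4).  Conversely, if the
   closure of the chamber contains an open piece of D_(I,V\I), it contains a point
   with a - b far from the integers; a chamber point close to it, translated into
   (0,1)^V, has its I-coordinates above all the others, and orienting each edge
   along increasing coordinates gives A' in [A] in which I is an up-set. *)

Lemma connect_Rle (T : finType) (e : rel T) (f : T -> R) :
  (forall x y, e x y -> f x <= f y) ->
  forall x y, connect e x y -> f x <= f y.
Proof.
move=> mono x y /connectP [p + ->]; elim: p x => [|z p IH] x /=.
  by move=> _; apply: Rle_refl.
by case/andP=> /mono xz /IH; apply: Rle_trans.
Qed.

Lemma strict_rank_no_cycle (T : finType) (e : rel T) (f : T -> R) x y :
  (forall x y, e x y -> f x < f y) -> e x y -> ~~ connect e y x.
Proof.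
move=> mono exy; apply/negP => /(connect_Rle (f := f)) yx.
have := mono _ _ exy; have := yx (fun u v euv => Rlt_le _ _ (mono _ _ euv)); lra.
Qed.

Lemma exists_lower_boundZ (T : finType) (f : T -> Z) : exists m, forall x, (m <= f x)%Z.
Proof.
exists (- Z.of_nat (\max_x Z.to_nat (Z.abs (f x))))%Z => x.
have := leq_bigmax (F := fun x => Z.to_nat (Z.abs (f x))) x; lia.
Qed.

Lemma exists_argmaxZ (T : finType) (f : T -> Z) (x0 : T) :
  exists i, forall j, (f j <= f i)%Z.
Proof.
have [m lb] := exists_lower_boundZ f.
exists [arg max_(i > x0) Z.to_nat (f i - m)]; case: arg_maxnP => // i _ imax j.
have := imax j isT; have := lb i; have := lb j; lia.
Qed.

Lemma constant_or_ltZ (T : finType) (f : T -> Z) :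
  (exists u v, (f u < f v)%Z) \/ (forall u v, f u = f v).
Proof.
case: (boolP [exists u, exists v, (f u <? f v)%Z]).
  by move=> /existsP [u /existsP [v /Z.ltb_spec0]]; left; exists u, v.
move=> /existsPn none; right=> u v.
move: (none u) (none v) => /existsPn /(_ v) /Z.ltb_spec0 + /existsPn /(_ u) /Z.ltb_spec0.
lia.
Qed.

Lemma sum_to_nat_decr (T : finType) (k : T -> Z) m i : (m < k i)%Z ->
  \sum_v Z.to_nat (k v - m) = (\sum_v Z.to_nat (k v + (if v == i then -1 else 0) - m)%Z).+1.
Proof.
move=> ki; rewrite (bigD1 i) //= [in RHS](bigD1 i) //= eqxx.
under [in RHS]eq_bigr => v /negbTE -> do rewrite Z.add_0_r.
lia.
Qed.

Lemma up_between (z : Z) r : IZR z < r < IZR z + 1 -> up r = (z + 1)%Z.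
Proof. by move=> hr; symmetry; apply: tech_up; rewrite plus_IZR; lra. Qed.

Lemma up_IZR (m : Z) : up (IZR m) = (m + 1)%Z.
Proof. by symmetry; apply: tech_up; rewrite plus_IZR; lra. Qed.

Lemma between_ints_unique (z z' : Z) r :
  IZR z < r < IZR z + 1 -> IZR z' < r < IZR z' + 1 -> z = z'.
Proof. by move=> /up_between h /up_between h'; lia. Qed.

Lemma not_int_between (z : Z) r : IZR z < r < IZR z + 1 -> ~ is_int r.
Proof.
move=> hr [m rm]; have := up_between hr; rewrite rm up_IZR => mz.
by move: hr; rewrite rm (_ : m = z); [lra | lia].
Qed.

Lemma convex_between (lo hi a b t : R) :
  lo < a < hi -> lo < b < hi -> 0 <= t <= 1 -> lo < (1 - t) * a + t * b < hi.
Proof.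
move=> ha hb ht; rewrite (_ : (1 - t) * a + t * b = a + t * (b - a)); last by ring.
have [ab | ba] := Rle_or_lt a b.
- have : 0 <= t * (b - a) by apply: Rmult_le_pos; lra.
  have : t * (b - a) <= b - a by nra.
  lra.
- have : t * (b - a) <= 0 by nra.
  have : b - a <= t * (b - a) by nra.
  lra.
Qed.

Lemma continuous_int_free_between (f : R -> R) (z : Z) : continuity f ->
  (forall t, 0 <= t <= 1 -> ~ is_int (f t)) ->
  IZR z < f 0 < IZR z + 1 -> IZR z < f 1 < IZR z + 1.
Proof.
move=> cf avoid hz.
have int_free c : is_int c -> 0 < (f 0 - c) * (f 1 - c).
  move=> ic; apply: Rnot_le_lt => sgn.
  have [t [ht ft]] := IVT_cor (fun t => f t - c) 0 1
    (continuity_minus _ _ cf (continuity_const (fun _ => c) (fun _ _ => erefl))) ltac:(lra) sgn.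
  by apply: (avoid t ht); rewrite (_ : f t = c) //; lra.
have := int_free (IZR z) (ex_intro _ z erefl).
have := int_free (IZR z + 1) (ex_intro _ (z + 1)%Z (esym (plus_IZR _ _))).
by split; nra.
Qed.

Lemma exists_far_from_ints (c0 d : R) : 0 < d -> exists c (N : Z) mu,
  0 < mu /\ Rabs (c - c0) < d /\ IZR N + mu <= c <= IZR N + 1 - mu.
Proof.
move=> d0; pose h := Rmin d (1 / 2).
have h0 : 0 < h by apply: Rmin_glb_lt; lra.
have [hd h2] : h <= d /\ h <= 1 / 2 by split; [apply: Rmin_l | apply: Rmin_r].
have [up_gt up_le] := archimed c0.
(* Move c0 by h/4 towards the middle of its unit interval. *)
exists (if Rlt_dec (c0 - (IZR (up c0) - 1)) (1 / 2) then c0 + h / 4 else c0 - h / 4).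
exists (up c0 - 1)%Z, (h / 4); rewrite minus_IZR.
by case: Rlt_dec => half /=; (split; [lra | split; [apply: Rabs_def1 | ]]); lra.
Qed.

Definition up_closed (n : nat) (A : {set 'I_n * 'I_n}) (I : {set 'I_n}) : Prop :=
  forall i j, (i, j) \in A -> i \in I -> j \in I.

Lemma chi_vertexP (n : nat) (A : {set 'I_n * 'I_n}) (I : {set 'I_n}) :
  is_vertex_order_poly A (chi I) <-> up_closed A I.
Proof.
rewrite /chi; split.
  move=> [[_ mono] _] i j ij iI; have := mono i j (connect1 ij).
  by rewrite iI; case: (j \in I) => //; lra.
move=> upI; split; first split.
- by move=> i; case: (i \in I); lra.
- apply: connect_Rle => i j ij; case iI: (i \in I); last by case: (j \in I); lra.
  by rewrite (upI _ _ ij iI); lra.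
move=> y z t [y01 _] [z01 _] t01 mix i; have := mix i; have := y01 i; have := z01 i.
by case: (i \in I) => *; split; nra.
Qed.

Section ToricPoset.

Variables (n : nat) (g : rel 'I_n).
Hypotheses (g_sym : symmetric g) (g_irr : irreflexive g).

Definition height (A : {set 'I_n * 'I_n}) (v : 'I_n) : nat :=
  #|[set u | connect (arcs_rel A) u v]|.

Lemma height_lt A i j : is_acyc g A -> (i, j) \in A -> (height A i < height A j)%N.
Proof.
move=> [_ [_ acyc]] ij; apply/proper_card/properP; split.
  by apply/subsetP => u; rewrite !inE => ui; apply: connect_trans ui (connect1 _).
by exists j; rewrite !inE ?connect0 //; apply: acyc.
Qed.

Lemma height_bounds A v : (0 < height A v <= n)%N.
Proof.
apply/andP; split; first by apply/card_gt0P; exists v; rewrite inE connect0.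
by apply: leq_trans (max_card _) _; rewrite card_ord.
Qed.

Lemma exists_source_in A (S : {set 'I_n}) i0 : is_acyc g A -> i0 \in S ->
  exists2 i, i \in S & forall j, j \in S -> (j, i) \notin A.
Proof.
move=> hA i0S; case: (arg_minnP (height A) i0S) => i iS imin.
exists i => // j jS; apply/negP => ji.
have := height_lt hA ji; have := imin j jS; lia.
Qed.

Lemma exists_linear_extension A : is_acyc g A ->
  exists x : vec n, (forall i, 0 < x i < 1) /\ (forall i j, (i, j) \in A -> x i < x j).
Proof.
move=> hA; exists (fun i => INR (height A i) / INR n.+1).
have n0 : 0 < INR n.+1 by apply: lt_0_INR; apply/ltP.
split=> [i | i j ij].
- have /andP [h0 hn] := height_bounds A i.
  have l0 : 0 < INR (height A i) by apply: lt_0_INR; apply/ltP.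
  have ln : INR (height A i) < INR n.+1 by apply: lt_INR; apply/ltP.
  split; first exact: Rdiv_lt_0_compat.
  apply: (Rmult_lt_reg_r (INR n.+1)) => //.
  by rewrite /Rdiv Rmult_assoc Rinv_l; lra.
- apply: Rmult_lt_compat_r; first exact: Rinv_0_lt_compat.
  by apply/lt_INR/ltP; apply: height_lt hA ij.
Qed.

Lemma flip_acyc A i : is_acyc g A -> is_source A i -> is_acyc g (flip A i).
Proof.
move=> hA /forallP src; have [sub [orient _]] := hA.
have no_in j : (j, i) \in A = false by apply/negbTE/src.
have out_edge w : g w i -> (i, w) \in A by move=> gwi; case: (orient _ _ gwi); rewrite ?no_in.
have mem_flip u v : ((u, v) \in flip A i) =
    if v == i then (i, u) \in A else (u != i) && ((u, v) \in A) by rewrite inE.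
split; [|split].
- move=> u v; rewrite mem_flip; case: eqP => [-> /sub | _ /andP [_ /sub]] //.
  by rewrite g_sym.
- move=> u v guv; case: (eqVneq v i) => [vi | vi].
    by left; rewrite mem_flip vi eqxx out_edge // -vi.
  case: (eqVneq u i) => [ui | ui].
    by right; rewrite mem_flip ui eqxx out_edge // g_sym -ui.
  by rewrite !mem_flip (negbTE vi) (negbTE ui) /=; case: (orient _ _ guv); [left | right].
- (* After the flip i is a sink: rank it above every height. *)
  move=> u v; apply: (strict_rank_no_cycle
    (f := fun v => INR (if v == i then n.+1 else height A v))) => x y.
  rewrite /arcs_rel mem_flip; case: (eqVneq y i) => [_ ix | _ /andP [xi xy]].
  + have xi : x != i by apply: contraTneq (sub _ _ ix) => ->; rewrite g_irr.
    rewrite (negbTE xi); apply/lt_INR/ltP; have := height_bounds A x; lia.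
  + by rewrite (negbTE xi); apply/lt_INR/ltP; apply: height_lt hA xy.
Qed.

(* The integer part of x_i - x_j for x in (0,1)^V increasing along A. *)
Definition edge_floor (A : {set 'I_n * 'I_n}) (i j : 'I_n) : Z :=
  if (i, j) \in A then (-1)%Z else 0%Z.

Definition floor_cobound (A B : {set 'I_n * 'I_n}) (k : 'I_n -> Z) : Prop :=
  forall i j, g i j -> edge_floor A i j = (edge_floor B i j + k i - k j)%Z.

Lemma floor_cobound_trans A B C k1 k2 :
  floor_cobound A B k1 -> floor_cobound B C k2 ->
  floor_cobound A C (fun v => k1 v + k2 v)%Z.
Proof. by move=> h1 h2 i j gij; rewrite h1 // h2 //; lia. Qed.

Lemma floor_cobound_flip A i : is_acyc g A -> is_source A i ->
  floor_cobound A (flip A i) (fun v => if v == i then (-1)%Z else 0%Z).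
Proof.
move=> [_ [orient _]] /forallP src u v guv.
have no_in j : (j, i) \in A = false by apply/negbTE/src.
rewrite /edge_floor /flip inE /=.
case: (eqVneq v i) => [vi | vi].
- subst v; have ui : u != i by apply: contraTneq guv => ->; rewrite g_irr.
  case: (orient _ _ guv) => [| iu]; first by rewrite no_in.
  by rewrite no_in iu (negbTE ui); lia.
- case: (eqVneq u i) => [ui | ui] /=; last by case: ifP; lia.
  subst u; case: (orient _ _ guv) => [iv | vi']; last by rewrite no_in in vi'.
  by rewrite iv; lia.
Qed.

Lemma orientation_eq_of_floors A B : is_acyc g A -> is_acyc g B ->
  (forall i j, g i j -> edge_floor A i j = edge_floor B i j) -> A = B.
Proof.
move=> [subA _] [subB _] eqf; apply/setP => -[u v]; have := eqf u v.
rewrite /edge_floor; case eA: ((u, v) \in A); case eB: ((u, v) \in B) => // h.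
- by have := h (subA _ _ eA); lia.
- by have := h (subB _ _ eB); lia.
Qed.

Lemma toric_equiv_acyc A B : toric_equiv g A B -> is_acyc g A <-> is_acyc g B.
Proof. by elim=> {A B} [A B [hA [hB _]] | A | A B _ IH | A B C _ IH1 _ IH2]; tauto. Qed.

Lemma toric_equiv_floor_cobound A B :
  toric_equiv g A B -> exists k, floor_cobound A B k.
Proof.
elim=> {A B} [A B [hA [_ [i [src ->]]]] | A | A B _ [k hk] | A B C _ [k1 h1] _ [k2 h2]].
- by eexists; apply: floor_cobound_flip.
- by exists (fun _ => 0%Z) => i j _; lia.
- by exists (fun v => - k v)%Z => i j gij; rewrite hk //; lia.
- by eexists; apply: floor_cobound_trans h1 h2.
Qed.

Lemma exists_max_source A B k (u : 'I_n) : is_acyc g B -> floor_cobound A B k ->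
  exists i, (forall v, (k v <= k i)%Z) /\ is_source B i.
Proof.
move=> hB hk; have [M maxM] := exists_argmaxZ k u.
pose S := [set v | (k v =? k M)%Z].
have [i /[!inE] /Z.eqb_spec top srcS] := exists_source_in hB (i0 := M) (S := S)
  ltac:(by rewrite inE Z.eqb_refl).
exists i; split=> [v | ]; first by rewrite top.
apply/forallP => j; apply/negP => ji.
case: (boolP (j \in S)) => [/srcS | /[!inE] /Z.eqb_spec kj]; first by rewrite ji.
(* Otherwise k j < k i would force edge_floor A j i <= -2. *)
have := hk _ _ (hB.1 _ _ ji); have := maxM j.
rewrite /edge_floor ji; case: ifP => _; lia.
Qed.

Lemma floor_cobound_toric_equiv A B k : is_acyc g A -> is_acyc g B ->
  floor_cobound A B k -> toric_equiv g A B.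
Proof.
move=> hA hB hk; have [m lb] := exists_lower_boundZ k.
have [N] := ubnP (\sum_v Z.to_nat (k v - m)).
elim: N k B lb hB hk => // N IH k B lb hB hk sum_lt.
have [[u [v ltuv]] | const] := constant_or_ltZ k.
- (* Flipping a source of B at the top of k lowers k there by one. *)
  have [i [imax src]] := exists_max_source u hB hk.
  have ki : (m < k i)%Z by have := lb u; have := imax v; lia.
  apply: rst_trans (IH _ (flip B i) _ (flip_acyc hB src)
    (floor_cobound_trans hk (floor_cobound_flip hB src)) _) _.
  + by move=> w; have := lb w; case: eqP => [-> | _]; lia.
  + by rewrite (sum_to_nat_decr ki) in sum_lt.
  + apply/rst_sym/rst_step; split=> //; split; first exact: flip_acyc.
    by exists i.
- rewrite (orientation_eq_of_floors hA hB) => [| i j gij]; first exact: rst_refl.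
  by rewrite hk // (const i j); lia.
Qed.

Definition in_lifted_chamber (A : {set 'I_n * 'I_n}) (y : vec n) : Prop :=
  forall i j, g i j ->
    IZR (edge_floor A i j) < y i - y j < IZR (edge_floor A i j) + 1.

Lemma lifted_chamber_of_monotone A x : is_acyc g A ->
  (forall i, 0 < x i < 1) -> (forall i j, (i, j) \in A -> x i < x j) ->
  in_lifted_chamber A x.
Proof.
move=> [_ [orient _]] x01 xmono i j gij; rewrite /edge_floor.
have := x01 i; have := x01 j; case: ifP => [ij | nij].
  by have := xmono _ _ ij; lra.
case: (orient _ _ gij) => [ij | ji]; first by rewrite ij in nij.
by have := xmono _ _ ji; lra.
Qed.

Lemma in_chamberP A y : is_acyc g A ->
  in_chamber g A y <->
  exists K : 'I_n -> Z, in_lifted_chamber A (fun i => y i + IZR (K i)).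
Proof.
move=> hA; split.
- move=> [x [x01 [xmono [gam [cont [gam0 [gam1 off]]]]]]].
  exists (fun i => Z.pred (up (gam 1 i - y i))) => i j gij.
  have lift v : y v + IZR (Z.pred (up (gam 1 v - y v))) = gam 1 v.
    by have [m e] := gam1 v; rewrite e up_IZR Z.pred_succ; lra.
  rewrite !lift; apply: (continuous_int_free_between (f := fun t => gam t i - gam t j)).
  + exact: continuity_minus.
  + by move=> t ht; apply: off.
  + by rewrite !gam0; apply: lifted_chamber_of_monotone.
- move=> [K hK]; have [x [x01 xmono]] := exists_linear_extension hA.
  pose y' i := y i + IZR (K i).
  exists x; split=> //; split=> //.
  exists (fun t i => x i + t * (y' i - x i)); split; [| split; [| split]].
  + by move=> i; reg.
  + by move=> i; ring.
  + by move=> i; exists (K i); rewrite /y'; ring.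
  + move=> t ht i j gij; apply: (not_int_between (z := edge_floor A i j)).
    rewrite (_ : _ - _ = (1 - t) * (x i - x j) + t * (y' i - y' j)); last by ring.
    apply: convex_between => //; first exact: lifted_chamber_of_monotone.
    exact: hK.
Qed.

Lemma in_chamber_off_arr A y : is_acyc g A -> in_chamber g A y -> off_arr g y.
Proof.
move=> hA /(in_chamberP _ hA) [K hK] i j gij [m e].
apply: (not_int_between (hK i j gij)); exists (m + K i - K j)%Z.
by rewrite !(plus_IZR, minus_IZR) -e; ring.
Qed.

Lemma monotone_in_chamber A x : is_acyc g A ->
  (forall i, 0 < x i < 1) -> (forall i j, (i, j) \in A -> x i < x j) ->
  in_chamber g A x.
Proof.
move=> hA x01 xmono; apply/in_chamberP => //; exists (fun _ => 0%Z) => i j gij.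
by rewrite !Rplus_0_r; apply: lifted_chamber_of_monotone.
Qed.

Lemma in_chamber_translate A y c (K : 'I_n -> Z) : is_acyc g A ->
  in_chamber g A y -> in_chamber g A (fun i => y i + c + IZR (K i)).
Proof.
move=> hA /(in_chamberP _ hA) [K0 hK0]; apply/in_chamberP => //.
exists (fun i => K0 i - K i)%Z => i j gij.
by rewrite !minus_IZR; have := hK0 i j gij; lra.
Qed.

Lemma toric_equiv_chamber A B y : is_acyc g A -> is_acyc g B ->
  in_chamber g A y -> toric_equiv g A B <-> in_chamber g B y.
Proof.
move=> hA hB /(in_chamberP _ hA) [K hK]; split.
- move=> /toric_equiv_floor_cobound [k hk]; apply/in_chamberP => //.
  exists (fun i => K i - k i)%Z => i j gij.
  by have := hK i j gij; rewrite hk // !(plus_IZR, minus_IZR); lra.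
- move=> /(in_chamberP _ hB) [K' hK'].
  apply: (floor_cobound_toric_equiv hA hB (k := fun i => K i - K' i)%Z) => i j gij.
  suff : (edge_floor A i j - (K i - K' i) + (K j - K' j))%Z = edge_floor B i j by lia.
  apply: (between_ints_unique (r := y i + IZR (K' i) - (y j + IZR (K' j)))) (hK' i j gij).
  by rewrite !(plus_IZR, minus_IZR); have := hK i j gij; lra.
Qed.

Definition orient_by (w : vec n) : {set 'I_n * 'I_n} :=
  [set p | g p.1 p.2 && Rlt_dec (w p.1) (w p.2)].

Lemma orient_by_acyc w : (forall i j, g i j -> w i <> w j) -> is_acyc g (orient_by w).
Proof.
move=> w_inj; split; [| split].
- by move=> i j; rewrite inE => /andP [].
- move=> i j gij; rewrite !inE /= gij -g_sym gij /=.
  case: (sumboolP (Rlt_dec (w i) (w j))) => [_ | ge]; first by left.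
  right; apply/sumboolP.
  by have := w_inj _ _ gij; lra.
- move=> i j; apply: (strict_rank_no_cycle (f := w)) => x y.
  by rewrite /arcs_rel inE => /andP [_ /sumboolP].
Qed.

Lemma separated_chamber_point A I : is_acyc g A ->
  (exists a0 b0 d, d > 0 /\ forall a b,
     Rabs (a - a0) < d -> Rabs (b - b0) < d -> in_closure g A (dpt I a b)) ->
  exists w, [/\ in_chamber g A w, forall i, 0 < w i < 1 &
                forall i j, i \in I -> j \notin I -> w j < w i].
Proof.
move=> hA [a0 [b0 [d [d0 hcl]]]].
have [c [N [mu [mu0 [cc0 cN]]]]] := exists_far_from_ints (a0 - b0) d0.
have [s [hs near]] := hcl (b0 + c) b0
  ltac:(by rewrite (_ : b0 + c - a0 = c - (a0 - b0)) //; ring)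
  ltac:(by rewrite Rminus_diag Rabs_R0) (mu / 4) ltac:(lra).
(* Translate so that the I-coordinates fall in (1/2,1) and the others in (0,1/2). *)
pose w i := s i + ((1 - (c - IZR N)) / 2 - b0) + IZR (if i \in I then (- N)%Z else 0%Z).
have w_in i : i \in I -> 1 / 2 < w i < 1.
  move=> iI; have := Rabs_def2 _ _ (near i).
  by rewrite /w /dpt iI opp_IZR; lra.
have w_out i : i \notin I -> 0 < w i < 1 / 2.
  move=> /negbTE iI; have := Rabs_def2 _ _ (near i).
  by rewrite /w /dpt iI; lra.
exists w; split.
- exact: in_chamber_translate.
- by move=> i; case: (boolP (i \in I)) => [/w_in | /w_out]; lra.
- by move=> i j /w_in + /w_out; lra.
Qed.

Lemma toric_filter_vertex A I : is_acyc g A -> toric_filter g A I ->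
  exists A', toric_equiv g A A' /\ is_vertex_order_poly A' (chi I).
Proof.
move=> hA [-> | [-> | [_ [_ open]]]].
1, 2: by exists A; split; [exact: rst_refl | apply/chi_vertexP => i j; rewrite !inE].
have [w [hw w01 sep]] := separated_chamber_point hA open.
have w_inj i j : g i j -> w i <> w j.
  by move=> gij wij; apply: (in_chamber_off_arr hA hw gij); exists 0%Z; rewrite wij; ring.
have hAw := orient_by_acyc w_inj.
exists (orient_by w); split.
- apply/(toric_equiv_chamber hA hAw hw); apply: monotone_in_chamber => // i j.
  by rewrite inE => /andP [_ /sumboolP].
- apply/chi_vertexP => i j; rewrite inE /= => /andP [_ /sumboolP wij] iI.
  by apply/negPn/negP => jI; have := sep _ _ iI jI; lra.
Qed.

Lemma vertex_toric_filter A A' I : is_acyc g A -> toric_equiv g A A' ->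
  is_vertex_order_poly A' (chi I) -> toric_filter g A I.
Proof.
move=> hA eqAA' /chi_vertexP upI; have hA' := (toric_equiv_acyc eqAA').1 hA.
have [p [p01 pmono]] := exists_linear_extension hA'.
case: (eqVneq I set0) => [-> | I0]; first by left.
case: (eqVneq I setT) => [-> | IT]; first by right; left.
right; right; split=> //; split=> //.
exists (3 / 4), (1 / 4), (1 / 8); split=> [| a b ha hb eps eps0]; first lra.
have [ha1 ha2] := Rabs_def2 _ _ ha; have [hb1 hb2] := Rabs_def2 _ _ hb.
pose ep := Rmin (eps / 2) (1 / 16).
have ep0 : 0 < ep by apply: Rmin_glb_lt; lra.
have [ep1 ep2] : ep <= eps / 2 /\ ep <= 1 / 16 by split; [apply: Rmin_l | apply: Rmin_r].
pose s i := dpt I a b i + ep * p i.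
have small i : 0 < ep * p i < ep by have := p01 i; split; nra.
have hs : in_chamber g A' s.
  apply: monotone_in_chamber => // [i | i j ij].
    by have := small i; rewrite /s /dpt; case: (i \in I); lra.
  have := small i; have := small j; have := pmono _ _ ij.
  rewrite /s /dpt; case iI: (i \in I); first by rewrite (upI _ _ ij iI) => *; nra.
  by case: (j \in I) => *; nra.
exists s; split.
- by apply/(toric_equiv_chamber hA' hA hs); apply: rst_sym.
- by move=> i; apply: Rabs_def1; have := small i; rewrite /s; lra.
Qed.

End ToricPoset.

Theorem mainTheorem13 (n : nat) (g : rel 'I_n)
    (g_sym : ssrbool.symmetric g) (g_irr : ssrbool.irreflexive g)
    (A : {set 'I_n * 'I_n}) (hA : is_acyc g A) (I : {set 'I_n}) :
  toric_filter g A I <->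
  exists A' : {set 'I_n * 'I_n},
    toric_equiv g A A' /\ is_vertex_order_poly A' (chi I).
Proof.
split; first exact: toric_filter_vertex.
by case=> A' [eqAA' vert]; apply: vertex_toric_filter eqAA' vert.
Qed.
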